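(* Let $K\ge2$, let $\mathbf{p}$ be a probability vector on $[K]$ with all $p_k>0$, let $\mathbf{W}$ be a $K\times K$ invertible row-stochastic matrix, and let $\hat{\mathbf{p}}_n$, $\check{\mathbf{p}}_n$ be as in the context. For a positive integer $\rho$ and $k\in[K]$ define $\hat\mu^{(\rho)}_{n,k}=n^\rho\mathbb{E}[(\hat p_{n,k}-p_k)^\rho]$ and $\check\mu^{(\rho)}_{n,k}=n^\rho\mathbb{E}[(\check p_{n,k}-p_k)^\rho]$. Then there is a constant $C>0$ (not depending on $n$) such that for all $n$, $$\big|\hat\mu^{(\rho)}_{n,k}-\check\mu^{(\rho)}_{n,k}\big|\le C\,n^\rho e^{-nD(\partial\mathbb{P}\mathbf{W}\Vert\mathbf{p}\mathbf{W})}.$$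
   Context: Setting: $X_1,\dots,X_n$ i.i.d. with law $\mathbf{p}$; each passed independently through $\mathbf{W}$ ($\Pr\{Y_i=\ell\mid X_i=k\}=W_{k,\ell}$), giving $\mathbf{y}_n$ with empirical distribution $\mathbf{t}(\mathbf{y}_n)$; $\check{\mathbf{p}}_n=\mathbf{t}(\mathbf{y}_n)\mathbf{W}^{-1}$ and $\hat{\mathbf{p}}_n=\mathrm{Proj}_{\mathbb{P}}(\check{\mathbf{p}}_n)$, where $\mathrm{Proj}_{\mathbb{P}}$ is a fixed map from vectors with entries summing to one into the probability simplex $\mathbb{P}$ with $\mathrm{Proj}_{\mathbb{P}}(\mathbf{v})=\mathbf{v}$ on $\mathbb{P}$. $\partial\mathbb{P}=\{\mathbf{r}\in\mathbb{P}:r_i=0\text{ for some }i\}$ and $D(\partial\mathbb{P}\mathbf{W}\Vert\mathbf{p}\mathbf{W})=\inf_{\mathbf{r}\in\partial\mathbb{P}}D(\mathbf{r}\mathbf{W}\Vert\mathbf{p}\mathbf{W})$ with $D$ the Kullback–Leibler divergence. *)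

From HB Require Import structures.
From mathcomp Require Import all_boot all_order all_algebra.
From mathcomp Require Import all_classical all_reals all_analysis.
Set Implicit Arguments. Unset Strict Implicit. Unset Printing Implicit Defensive.
Import Order.TTheory GRing.Theory Num.Theory.
Local Open Scope ring_scope.
Local Open Scope classical_set_scope.

Section Defs.
Variable R : realType.
Variable K : nat.

Definition in_simplex (r : 'rV[R]_K) : Prop :=
  (forall i, 0 <= r 0 i) /\ \sum_i r 0 i = 1.

Definition in_boundary (r : 'rV[R]_K) : Prop :=
  in_simplex r /\ exists i, r 0 i = 0.

Definition row_stochastic (W : 'M[R]_K) : Prop :=
  (forall i j, 0 <= W i j) /\ (forall i, \sum_j W i j = 1).

Definition KL (q s : 'rV[R]_K) : R :=
  \sum_i (if q 0 i == 0 then 0 else q 0 i * ln (q 0 i / s 0 i)).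

Definition KL_boundary (W : 'M[R]_K) (p : 'rV[R]_K) : R :=
  inf [set KL (r *m W) (p *m W) | r in in_boundary].

Definition empirical (n : nat) (y : {ffun 'I_n -> 'I_K}) : 'rV[R]_K :=
  \row_l (#|[set i | y i == l]|%:R / n%:R).

Definition sample_prob (W : 'M[R]_K) (p : 'rV[R]_K) (n : nat)
    (y : {ffun 'I_n -> 'I_K}) : R :=
  \prod_i (p *m W) 0 (y i).

Definition Esample (W : 'M[R]_K) (p : 'rV[R]_K) (n : nat)
    (f : {ffun 'I_n -> 'I_K} -> R) : R :=
  \sum_(y : {ffun 'I_n -> 'I_K}) sample_prob W p y * f y.

Definition pcheck (W : 'M[R]_K) (n : nat) (y : {ffun 'I_n -> 'I_K}) : 'rV[R]_K :=
  empirical y *m invmx W.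

Definition phat (Proj : 'rV[R]_K -> 'rV[R]_K) (W : 'M[R]_K) (n : nat)
    (y : {ffun 'I_n -> 'I_K}) : 'rV[R]_K :=
  Proj (pcheck W y).

Definition mu_check (W : 'M[R]_K) (p : 'rV[R]_K) (rho n : nat) (k : 'I_K) : R :=
  n%:R ^+ rho * Esample W p (fun y : {ffun 'I_n -> 'I_K} => (pcheck W y 0 k - p 0 k) ^+ rho).

Definition mu_hat (Proj : 'rV[R]_K -> 'rV[R]_K) (W : 'M[R]_K) (p : 'rV[R]_K)
    (rho n : nat) (k : 'I_K) : R :=
  n%:R ^+ rho * Esample W p (fun y : {ffun 'I_n -> 'I_K} => (phat Proj W y 0 k - p 0 k) ^+ rho).

End Defs.

From HB Require Import structures.
From mathcomp Require Import all_boot all_order all_algebra.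
From mathcomp Require Import all_classical all_reals all_analysis.
From mathcomp Require Import ring lra.
Set Implicit Arguments. Unset Strict Implicit. Unset Printing Implicit Defensive.
Import Order.TTheory GRing.Theory Num.Theory.
Import numFieldNormedType.Exports.
Local Open Scope ring_scope.

(* Where [pcheck] lies in the simplex the projection does nothing, so the two
   moments differ only on the event that some coordinate [i] of [pcheck] is
   negative, on which both integrands are bounded.  That event says that the sum
   of the i.i.d. variables [invmx W Y_j i], of mean [p_i > 0], is negative.
   Chernoff's bound at a saddle point [lam] of their moment generating function
   gives [mgf lam ^+ n], and [- ln (mgf lam)] is the divergence from [pW] of the
   exponentially tilted law [t].  As [t W^-1] sums to one and has vanishing
   [i]-th coordinate, the segment from [p] towards it meets the boundary of the
   simplex at some [r] with [rW] on the segment from [pW] to [t], and convexity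
   of the divergence gives [D(rW || pW) <= D(t || pW) = - ln (mgf lam)]. *)

Section ln_facts.
Variable R : realType.
Implicit Types x y q t s : R.

Lemma ln_le_subr1 x : 0 < x -> ln x <= x - 1.
Proof.
by move=> x0; have := @le_ln1Dx R (x - 1); rewrite addrCA subrr addr0; apply; lra.
Qed.

Lemma lnB_le x y : 0 < x -> 0 < y -> ln x - ln y <= x / y - 1.
Proof.
by move=> x0 y0; rewrite -ln_div ?posrE //; apply: ln_le_subr1; exact: divr_gt0.
Qed.

Lemma subr_le_mul_lnB x y : 0 < x -> 0 < y -> x - y <= x * (ln x - ln y).
Proof.
move=> x0 y0; have := lnB_le y0 x0.
rewrite -(ler_pM2l x0) [X in _ <= X](_ : _ = y - x); first lra.
by field; rewrite gt_eqF.
Qed.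

Lemma convex_comb_gt0 q t s :
  0 < q -> 0 < t -> 0 <= s <= 1 -> 0 < (1 - s) * q + s * t.
Proof. by move=> q0 t0 /andP[s0 s1]; nra. Qed.

Lemma convex_xlnx_rel q t s : 0 < q -> 0 < t -> 0 <= s <= 1 ->
  ((1 - s) * q + s * t) * (ln ((1 - s) * q + s * t) - ln q)
  <= s * (t * (ln t - ln q)).
Proof.
move=> q0 t0 s01; have /andP[s0 s1] := s01.
set x := (1 - s) * q + s * t.
have x0 : 0 < x by exact: convex_comb_gt0.
have split_gap : x * (ln x - ln q) - s * (t * (ln t - ln q)) =
   (1 - s) * q * (ln x - ln q) + s * t * (ln x - ln t) by rewrite /x; ring.
have hq : (1 - s) * q * (ln x - ln q) <= (1 - s) * q * (x / q - 1).
  by rewrite ler_wpM2l ?lnB_le // mulr_ge0 ?subr_ge0 // ltW.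
have ht : s * t * (ln x - ln t) <= s * t * (x / t - 1).
  by rewrite ler_wpM2l ?lnB_le // mulr_ge0 // ltW.
have tangents0 : (1 - s) * q * (x / q - 1) + s * t * (x / t - 1) = 0.
  by rewrite /x; field; rewrite !gt_eqF.
by rewrite -subr_le0 split_gap -tangents0 lerD.
Qed.

End ln_facts.

Section relative_entropy.
Variables (R : realType) (K : nat).
Implicit Types u q t : 'rV[R]_K.

Lemma KL_ge_sumB u q : (forall l, 0 <= u 0 l) -> (forall l, 0 < q 0 l) ->
  \sum_l u 0 l - \sum_l q 0 l <= KL u q.
Proof.
move=> u0 q0; rewrite /KL -sumrB; apply: ler_sum => l _.
case: eqP => [->|/eqP ul]; first by rewrite sub0r oppr_le0 ltW.
have ul0 : 0 < u 0 l by rewrite lt0r ul u0.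
by rewrite ln_div ?posrE //; exact: subr_le_mul_lnB.
Qed.

Lemma KL_gt0E u q : (forall l, 0 < u 0 l) -> (forall l, 0 < q 0 l) ->
  KL u q = \sum_l u 0 l * (ln (u 0 l) - ln (q 0 l)).
Proof. by move=> u0 q0; apply: eq_bigr => l _; rewrite gt_eqF // ln_div ?posrE. Qed.

Lemma KL_segment_le q t (s : R) :
  (forall l, 0 < q 0 l) -> (forall l, 0 < t 0 l) -> 0 <= s <= 1 ->
  KL ((1 - s) *: q + s *: t) q <= s * KL t q.
Proof.
move=> q0 t0 s01; rewrite (KL_gt0E t0 q0) mulr_sumr KL_gt0E //.
  by apply: ler_sum => l _; rewrite !mxE; exact: convex_xlnx_rel.
by move=> l; rewrite !mxE; exact: convex_comb_gt0.
Qed.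

End relative_entropy.

Section stochastic_matrices.
Variables (R : realType) (K : nat).
Implicit Types (W M : 'M[R]_K) (v : 'rV[R]_K).

Lemma sum_mulmx_rowsum1 M v : (forall l, \sum_j M l j = 1) ->
  \sum_j (v *m M) 0 j = \sum_j v 0 j.
Proof.
move=> M1; under eq_bigr do rewrite mxE.
by rewrite exchange_big; apply: eq_bigr => l _; rewrite -mulr_sumr M1 mulr1.
Qed.

Lemma invmx_rowsum1 W : row_stochastic W -> W \in unitmx ->
  forall l, \sum_j invmx W l j = 1.
Proof.
move=> [_ W1] Wu l; pose one : 'cV[R]_K := const_mx 1.
have rowsumE M i : \sum_j M i j = (M *m one) i 0.
  by rewrite mxE; apply: eq_bigr => j _; rewrite mxE mulr1.
have W_one : W *m one = one by apply/matrixP => a b; rewrite ord1 -rowsumE W1 mxE.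
by rewrite rowsumE -{1}W_one mulmxA mulVmx // mul1mx mxE.
Qed.

Lemma mulmx_stochastic_gt0 v W : (forall l, 0 < v 0 l) ->
  row_stochastic W -> W \in unitmx -> forall l, 0 < (v *m W) 0 l.
Proof.
move=> v0 [W0 _] Wu l; rewrite mxE.
have terms_ge0 j : 0 <= v 0 j * W j l by rewrite mulr_ge0 // ltW.
rewrite lt_def sumr_ge0 ?andbT //; apply/eqP.
move/(psumr_eq0P (fun j _ => terms_ge0 j)) => col0.
have : (invmx W *m W) l l = 1 by rewrite mulVmx // mxE eqxx.
rewrite mxE big1 => [/esym/eqP|j _]; first by rewrite oner_eq0.
have /eqP := col0 j isT; rewrite mulf_eq0 gt_eqF //= => /eqP ->; exact: mulr0.
Qed.

End stochastic_matrices.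

Section simplex.
Variables (R : realType) (K : nat).

Lemma simplex_coord_ge0_le1 (v : 'rV[R]_K) l :
  in_simplex v -> 0 <= v 0 l <= 1.
Proof.
by move=> [v0 v1]; rewrite v0 -v1 (bigD1 l) //= lerDl sumr_ge0.
Qed.

Lemma segment_meets_boundary (p v : 'rV[R]_K) (i : 'I_K) :
  in_simplex p -> (forall l, 0 < p 0 l) -> \sum_l v 0 l = 1 -> v 0 i = 0 ->
  exists2 s, 0 <= s <= 1 & in_boundary ((1 - s) *: p + s *: v).
Proof.
move=> [_ p1] p0 v1 vi.
have gap l : v 0 l <= 0 -> 0 < p 0 l - v 0 l by move: (p0 l); lra.
(* [hit l] is the parameter at which the [l]-th coordinate of
   [(1 - s) p + s v] vanishes; [2] stands for "never on [0, 1]". *)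
pose hit l := if v 0 l <= 0 then p 0 l / (p 0 l - v 0 l) else 2.
have [l0 _ hit_min] := @arg_minP _ _ _ i xpredT hit isT.
set s := hit l0.
have s1 : s <= 1.
  by rewrite (le_trans (hit_min i isT)) // /hit vi lexx subr0 divff ?gt_eqF.
have vl0 : v 0 l0 <= 0 by move: s1; rewrite /s /hit; case: ifP => // _; lra.
have sE : s = p 0 l0 / (p 0 l0 - v 0 l0) by rewrite /s /hit vl0.
have s0 : 0 <= s by rewrite sE divr_ge0 // ltW ?gap.
have combE l : ((1 - s) *: p + s *: v) 0 l = (1 - s) * p 0 l + s * v 0 l.
  by rewrite !mxE.
exists s; first by rewrite s0 s1.
split; last by exists l0; rewrite combE sE; field; rewrite gt_eqF ?gap.
split; last first.
  by rewrite (eq_bigr _ (fun l _ => combE l)) big_split /= -!mulr_sumr p1 v1; ring.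
move=> l; rewrite combE; case: (lerP (v 0 l) 0) => vl; last first.
  by rewrite addr_ge0 // mulr_ge0 ?subr_ge0 // ?ltW.
have := hit_min l isT; rewrite -/s /hit vl ler_pdivlMr ?gap //; lra.
Qed.

End simplex.

Section exponential_tilting.
Variables (R : realType) (K : nat) (q : 'rV[R]_K) (a : 'I_K -> R).
Hypothesis q_gt0 : forall l, 0 < q 0 l.

Definition mgf (lam : R) : R := \sum_l q 0 l * expR (- (lam * a l)).

(* [dmgf] is minus the derivative of [mgf]; its zeros are the saddle points. *)
Definition dmgf (lam : R) : R := \sum_l q 0 l * a l * expR (- (lam * a l)).

Definition tilt (lam : R) : 'rV[R]_K :=
  \row_l (q 0 l * expR (- (lam * a l)) / mgf lam).

Lemma mgf_gt0 (l0 : 'I_K) lam : 0 < mgf lam.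
Proof.
rewrite /mgf (bigD1 l0) //= ltr_pwDl ?mulr_gt0 ?expR_gt0 //.
by rewrite sumr_ge0 // => l _; rewrite mulr_ge0 ?ltW ?expR_gt0.
Qed.

Lemma tilt_gt0 lam l : 0 < tilt lam 0 l.
Proof. by rewrite mxE divr_gt0 ?mulr_gt0 ?expR_gt0 ?(mgf_gt0 l). Qed.

Lemma tilt_sum1 (l0 : 'I_K) lam : \sum_l tilt lam 0 l = 1.
Proof.
under eq_bigr do rewrite mxE.
by rewrite -mulr_suml divff // gt_eqF // (mgf_gt0 l0).
Qed.

Lemma tilt_mean0 lam : dmgf lam = 0 -> \sum_l tilt lam 0 l * a l = 0.
Proof.
move=> dmgf0; transitivity (dmgf lam / mgf lam); last by rewrite dmgf0 mul0r.
by rewrite /dmgf mulr_suml; apply: eq_bigr => l _; rewrite mxE; ring.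
Qed.

Lemma KL_tilt (l0 : 'I_K) lam : dmgf lam = 0 -> KL (tilt lam) q = - ln (mgf lam).
Proof.
move=> dmgf0; rewrite (KL_gt0E (tilt_gt0 lam) q_gt0).
have lnE l : ln (tilt lam 0 l) - ln (q 0 l) = - (lam * a l) - ln (mgf lam).
  rewrite mxE ln_div ?posrE ?mulr_gt0 ?expR_gt0 ?(mgf_gt0 l0) //.
  by rewrite lnM ?posrE ?expR_gt0 // expRK; ring.
under eq_bigr do rewrite lnE mulrBr mulrN mulrCA.
by rewrite sumrB sumrN -mulr_sumr tilt_mean0 // -mulr_suml (tilt_sum1 l0); ring.
Qed.

End exponential_tilting.

Section saddle_point.
Variables (R : realType) (K : nat) (q : 'rV[R]_K) (a : 'I_K -> R).
Hypothesis q_gt0 : forall l, 0 < q 0 l.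

Lemma dmgf_term_le (lam : R) l : 0 <= lam ->
  q 0 l * a l * expR (- (lam * a l)) <= q 0 l * `|a l|.
Proof.
move=> lam0; have ql := q_gt0 l; case: (lerP 0 (a l)) => al.
  have e1 : expR (- (lam * a l)) <= 1 by rewrite -expR0 ler_expR oppr_le0 mulr_ge0.
  by rewrite ger0_norm // -[X in _ <= X]mulr1 ler_wpM2l // mulr_ge0 // ltW.
apply: (@le_trans _ _ 0); last exact: mulr_ge0 (ltW ql) (normr_ge0 _).
apply: mulr_le0_ge0; last exact/ltW/expR_gt0.
by rewrite pmulr_rle0 // ltW.
Qed.

Lemma exists_dmgf_le0 l0 : a l0 < 0 -> exists2 b, 0 <= b & dmgf q a b <= 0.
Proof.
move=> al0; pose A := \sum_l q 0 l * `|a l|; pose b := A / (q 0 l0 * a l0 ^+ 2).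
have qa2 : 0 < q 0 l0 * a l0 ^+ 2 by rewrite mulr_gt0 // exprn_even_gt0 ?ltr0_neq0.
have A0 : 0 <= A.
  by apply: sumr_ge0 => l _; exact: mulr_ge0 (ltW (q_gt0 l)) (normr_ge0 _).
have b0 : 0 <= b := divr_ge0 A0 (ltW qa2).
exists b => //.
have AE : A = q 0 l0 * `|a l0| + \sum_(l | l != l0) q 0 l * `|a l|.
  by rewrite /A (bigD1 l0).
have others : \sum_(l | l != l0) q 0 l * a l * expR (- (b * a l))
              <= \sum_(l | l != l0) q 0 l * `|a l|.
  by apply: ler_sum => l _; exact: dmgf_term_le.
(* [expR x >= 1 + x] makes the [l0] term at most [q a - b q a^2 = q a - A]. *)
have at_l0 : q 0 l0 * a l0 * expR (- (b * a l0)) <= q 0 l0 * a l0 - A.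
  have -> : q 0 l0 * a l0 - A = q 0 l0 * a l0 * (1 + - (b * a l0)).
    by rewrite -[A](divfK (lt0r_neq0 qa2)) -/b; ring.
  by rewrite ler_nM2l ?expR_ge1Dx // pmulr_rlt0.
have qa : q 0 l0 * a l0 < 0 by rewrite pmulr_rlt0.
rewrite /dmgf (bigD1 l0) //=; rewrite ltr0_norm // mulrN in AE; lra.
Qed.

Lemma continuous_dmgf : continuous (dmgf q a).
Proof.
apply: (continuous_big (op := +%R)) => [|l _]; first exact: add_continuous.
move=> x; apply: cvgM; first exact: cvg_cst.
apply: continuous_comp; last exact: continuous_expR.
by apply: cvgN; exact: mulrr_continuous.
Qed.

Lemma dmgf_root : 0 < \sum_l q 0 l * a l -> (exists l, a l < 0) ->
  exists2 lam, 0 <= lam & dmgf q a lam = 0.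
Proof.
move=> mean_gt0 [l0 /exists_dmgf_le0 [b b0 fb]].
have f0 : 0 < dmgf q a 0.
  by rewrite /dmgf; under eq_bigr do rewrite mul0r oppr0 expR0 mulr1.
have sign_change :
    Num.min (dmgf q a 0) (dmgf q a b) <= 0 <= Num.max (dmgf q a 0) (dmgf q a b).
  by rewrite ge_min le_max fb orbT (ltW f0).
have [lam] := IVT b0 (continuous_subspaceT continuous_dmgf) sign_change.
by rewrite in_itv /= => /andP[lam0 _]; exists lam.
Qed.

End saddle_point.

Section empirical_distribution.
Variables (R : realType) (K n : nat).
Hypothesis n_gt0 : (0 < n)%N.
Implicit Types (y : {ffun 'I_n -> 'I_K}) (W : 'M[R]_K).

Lemma empiricalE y l : empirical R y 0 l = #|[pred j | y j == l]|%:R / n%:R.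
Proof.
rewrite mxE; congr (_%:R / _); apply: eq_card => j.
by rewrite /in_set inE /=; apply/asboolP/idP.
Qed.

Lemma empirical_ge0_le1 y l : 0 <= empirical R y 0 l <= 1.
Proof.
rewrite empiricalE divr_ge0 //= ler_pdivrMr ?ltr0n // mul1r ler_nat.
by rewrite (leq_trans (max_card _)) // card_ord.
Qed.

Lemma sum_empirical y : \sum_l empirical R y 0 l = 1.
Proof.
under eq_bigr do rewrite empiricalE.
rewrite -mulr_suml; have -> : \sum_l (#|[pred j | y j == l]|%:R : R) = n%:R.
  rewrite -natr_sum -[in RHS](card_ord n) -sum1_card (partition_big y xpredT) //=.
  by congr _%:R; apply: eq_bigr => l _; rewrite sum1_card.
by rewrite divff // pnatr_eq0 -lt0n.
Qed.

Lemma pcheckE W y i : n%:R * pcheck W y 0 i = \sum_j invmx W (y j) i.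
Proof.
rewrite mxE mulr_sumr (partition_big y xpredT) //=; apply: eq_bigr => l _.
rewrite empiricalE mulrA mulrCA divff ?pnatr_eq0 -?lt0n // mulr1 mulr_natl.
by rewrite -sumr_const; apply: eq_big => // j /eqP ->.
Qed.

Lemma pcheck_lt0E W y i : (pcheck W y 0 i < 0) = (\sum_j invmx W (y j) i < 0).
Proof. by rewrite -pcheckE pmulr_rlt0 ?ltr0n. Qed.

Lemma sum_pcheck W y :
  row_stochastic W -> W \in unitmx -> \sum_l pcheck W y 0 l = 1.
Proof.
by move=> Ws Wu; rewrite sum_mulmx_rowsum1 ?sum_empirical //; exact: invmx_rowsum1.
Qed.

Lemma abs_pcheck_le W y k : `|pcheck W y 0 k| <= \sum_l `|invmx W l k|.
Proof.
rewrite mxE; apply: le_trans (ler_norm_sum _ _ _) _; apply: ler_sum => l _.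
have /andP[e0 e1] := empirical_ge0_le1 y l.
by rewrite normrM ger0_norm // ler_piMl.
Qed.

End empirical_distribution.

Lemma sample_prob_ge0 (R : realType) (K n : nat) (W : 'M[R]_K) (p : 'rV[R]_K)
    (y : {ffun 'I_n -> 'I_K}) :
  in_simplex p -> row_stochastic W -> 0 <= sample_prob W p y.
Proof.
move=> [p0 _] [W0 _]; apply: prodr_ge0 => j _.
by rewrite mxE sumr_ge0 // => l _; rewrite mulr_ge0.
Qed.

Lemma chernoff_sum_lt0 (R : realType) (K n : nat) (q : 'rV[R]_K) (f : 'I_K -> R)
    (lam : R) :
  (forall l, 0 <= q 0 l) -> 0 <= lam ->
  \sum_(y : {ffun 'I_n -> 'I_K}) (\prod_j q 0 (y j)) * (\sum_j f (y j) < 0)%R%:R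
    <= mgf q f lam ^+ n.
Proof.
move=> q0 lam0.
have -> : mgf q f lam ^+ n =
    \sum_(y : {ffun 'I_n -> 'I_K}) \prod_j (q 0 (y j) * expR (- (lam * f (y j)))).
  transitivity (\prod_(j < n) mgf q f lam); first by rewrite prodr_const card_ord.
  exact: bigA_distr_bigA.
apply: ler_sum => y _; rewrite big_split /=.
have qy0 : 0 <= \prod_j q 0 (y j) by exact: prodr_ge0.
case: ltrP => [neg|_]; last first.
  by rewrite mulr0 mulr_ge0 // prodr_ge0 // => j _; exact/ltW/expR_gt0.
rewrite mulr1 ler_peMr // -expR_sum -expR0 ler_expR sumrN -mulr_sumr oppr_ge0.
by rewrite mulr_ge0_le0 // ltW.
Qed.

Section pcheck_tail.
Variables (R : realType) (K : nat) (p : 'rV[R]_K) (W : 'M[R]_K).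
Hypotheses (p_simplex : in_simplex p) (p_gt0 : forall l, 0 < p 0 l).
Hypotheses (W_stoch : row_stochastic W) (W_unit : W \in unitmx).

Let q := p *m W.
Let q_gt0 : forall l, 0 < q 0 l := mulmx_stochastic_gt0 p_gt0 W_stoch W_unit.
Let sum_q : \sum_l q 0 l = 1.
Proof. by rewrite sum_mulmx_rowsum1 ?p_simplex.2 //; case: W_stoch. Qed.

Lemma KL_boundary_le r : in_boundary r -> KL_boundary W p <= KL (r *m W) q.
Proof.
move=> r_bd; apply: ge_inf; last by exists r.
exists 0 => _ [r' [[r'0 r'1] _] <-].
have rW0 l : 0 <= (r' *m W) 0 l.
  by rewrite mxE sumr_ge0 // => j _; rewrite mulr_ge0 //; case: W_stoch.
have := KL_ge_sumB rW0 q_gt0.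
by rewrite sum_mulmx_rowsum1 ?r'1 ?sum_q ?subrr //; case: W_stoch.
Qed.

Lemma KL_boundary_le_tilt i lam : dmgf q (fun l => invmx W l i) lam = 0 ->
  KL_boundary W p <= - ln (mgf q (fun l => invmx W l i) lam).
Proof.
set a := fun l => invmx W l i => saddle; set t := tilt q a lam.
have t_gt0 : forall l, 0 < t 0 l := tilt_gt0 a q_gt0 lam.
have sum_t : \sum_l t 0 l = 1 := tilt_sum1 a q_gt0 i lam.
pose v := t *m invmx W.
have sum_v : \sum_l v 0 l = 1.
  by rewrite sum_mulmx_rowsum1 //; exact: invmx_rowsum1.
have vi : v 0 i = 0 by rewrite mxE; exact: tilt_mean0.
have [s s01 r_bd] := segment_meets_boundary p_simplex p_gt0 sum_v vi.
have rW : ((1 - s) *: p + s *: v) *m W = (1 - s) *: q + s *: t.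
  by rewrite mulmxDl -!scalemxAl mulmxKV.
have KL_t_ge0 : 0 <= KL t q.
  by have := KL_ge_sumB (fun l => ltW (t_gt0 l)) q_gt0; rewrite sum_t sum_q subrr.
rewrite -(KL_tilt q_gt0 i saddle); apply: le_trans (KL_boundary_le r_bd) _.
rewrite rW; apply: le_trans (KL_segment_le q_gt0 t_gt0 s01) _.
by rewrite ler_piMl //; case/andP: s01.
Qed.

Lemma prob_pcheck_lt0 n i : (0 < n)%N ->
  Esample W p (fun y : {ffun 'I_n -> 'I_K} => (pcheck W y 0 i < 0)%R%:R)
    <= expR (- (n%:R * KL_boundary W p)).
Proof.
move=> n_gt0; set a := fun l => invmx W l i.
have [/existsP [l al0]|/existsPn a_ge0] := boolP [exists l, a l < 0]; last first.
  rewrite /Esample big1 ?expR_ge0 // => y _.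
  rewrite pcheck_lt0E // ltNge sumr_ge0 ?mulr0 // => j _.
  by rewrite leNgt a_ge0.
have mean_gt0 : 0 < \sum_l q 0 l * a l.
  by have := p_gt0 i; rewrite -{1}[p](mulmxK W_unit) mxE.
have [lam lam0 saddle] := dmgf_root q_gt0 mean_gt0 (ex_intro _ l al0).
have mgf_pos : 0 < mgf q a lam := mgf_gt0 a q_gt0 l lam.
have mgf_le : mgf q a lam <= expR (- KL_boundary W p).
  rewrite -[mgf q a lam]lnK ?posrE // ler_expR lerNr.
  exact: KL_boundary_le_tilt.
apply: le_trans (_ : _ <= mgf q a lam ^+ n) _.
  rewrite /Esample /sample_prob; under eq_bigr do rewrite pcheck_lt0E //.
  exact: chernoff_sum_lt0 (fun l => ltW (q_gt0 l)) lam0.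
by rewrite -mulrN expRM_natl; apply: lerXn2r; rewrite // nnegrE ?expR_ge0 ?ltW.
Qed.

End pcheck_tail.

Section moment_difference.
Variables (R : realType) (K : nat) (p : 'rV[R]_K) (W : 'M[R]_K).
Variables (Proj : 'rV[R]_K -> 'rV[R]_K) (k : 'I_K) (rho : nat).
Hypotheses (p_simplex : in_simplex p).
Hypotheses (W_stoch : row_stochastic W) (W_unit : W \in unitmx).
Hypothesis Proj_simplex : forall v : 'rV[R]_K, \sum_i v 0 i = 1 -> in_simplex (Proj v).
Hypothesis Proj_id : forall v : 'rV[R]_K, in_simplex v -> Proj v = v.

Let G := 1 + (\sum_l `|invmx W l k| + 1) ^+ rho.
Let G_ge0 : 0 <= G.
Proof. by rewrite addr_ge0 // exprn_ge0 // addr_ge0 // sumr_ge0. Qed.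

Lemma moment_integrand_diff_le n (y : {ffun 'I_n -> 'I_K}) : (0 < n)%N ->
  `|(phat Proj W y 0 k - p 0 k) ^+ rho - (pcheck W y 0 k - p 0 k) ^+ rho|
    <= G * \sum_i (pcheck W y 0 i < 0)%R%:R.
Proof.
move=> n_gt0; have sum_pc := sum_pcheck n_gt0 y W_stoch W_unit.
have [/forallP pc_ge0|/forallPn [i]] := boolP [forall i, 0 <= pcheck W y 0 i].
  have pc_simplex : in_simplex (pcheck W y) by [].
  by rewrite /phat Proj_id // subrr normr0 mulr_ge0 ?sumr_ge0.
rewrite -ltNge => neg.
have count_ge1 : 1 <= \sum_i (pcheck W y 0 i < 0)%R%:R :> R.
  by rewrite (bigD1 i) //= neg lerDl sumr_ge0.
apply: le_trans (ler_peMr G_ge0 count_ge1).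
have /andP[p0 p1] := simplex_coord_ge0_le1 k p_simplex.
have hat_close : `|phat Proj W y 0 k - p 0 k| <= 1.
  have /andP[h0 h1] := simplex_coord_ge0_le1 k (Proj_simplex sum_pc).
  by rewrite ler_norml /phat; apply/andP; split; lra.
have check_close : `|pcheck W y 0 k - p 0 k| <= \sum_l `|invmx W l k| + 1.
  apply: le_trans (ler_normB _ _) _.
  by rewrite lerD ?abs_pcheck_le // ger0_norm.
apply: le_trans (ler_normB _ _) _; rewrite !normrX lerD ?exprn_ile1 //.
by apply: lerXn2r; rewrite // nnegrE (le_trans _ check_close).
Qed.

Lemma Esample_moment_diff_le n : (0 < n)%N ->
  `|Esample W p (fun y : {ffun 'I_n -> 'I_K} => (phat Proj W y 0 k - p 0 k) ^+ rho)
    - Esample W p (fun y : {ffun 'I_n -> 'I_K} => (pcheck W y 0 k - p 0 k) ^+ rho)|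
  <= G * \sum_i Esample W p (fun y : {ffun 'I_n -> 'I_K} => (pcheck W y 0 i < 0)%R%:R).
Proof.
move=> n_gt0; rewrite /Esample -sumrB exchange_big /= mulr_sumr.
apply: le_trans (ler_norm_sum _ _ _) _; apply: ler_sum => y _.
have P0 := sample_prob_ge0 y p_simplex W_stoch.
rewrite -mulrBr -mulr_sumr normrM ger0_norm // mulrCA.
by rewrite ler_wpM2l // moment_integrand_diff_le.
Qed.

End moment_difference.

Theorem lemma12 (R : realType) (K : nat) (p : 'rV[R]_K) (W : 'M[R]_K)
    (Proj : 'rV[R]_K -> 'rV[R]_K) (rho : nat) (k : 'I_K) :
  (2 <= K)%N ->
  in_simplex p -> (forall i, 0 < p 0 i) ->
  row_stochastic W -> W \in unitmx ->
  (forall v : 'rV[R]_K, \sum_i v 0 i = 1 -> in_simplex (Proj v)) ->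
  (forall v : 'rV[R]_K, in_simplex v -> Proj v = v) ->
  (0 < rho)%N ->
  exists C : R, 0 < C /\
    forall n : nat, (0 < n)%N ->
      `| mu_hat Proj W p rho n k - mu_check W p rho n k |
        <= C * n%:R ^+ rho * expR (- (n%:R * KL_boundary W p)).
Proof.
move=> K_ge2 p_simplex p_gt0 W_stoch W_unit Proj_simplex Proj_id _.
set G := 1 + (\sum_l `|invmx W l k| + 1) ^+ rho.
have G_gt0 : 0 < G by rewrite ltr_pwDl // exprn_ge0 // addr_ge0 // sumr_ge0.
exists (G * K%:R); split=> [|n n_gt0].
  by rewrite mulr_gt0 // ltr0n (leq_trans _ K_ge2).
rewrite /mu_hat /mu_check -mulrBr normrM ger0_norm ?exprn_ge0 //.
rewrite [X in _ <= X]mulrAC [X in _ <= X]mulrC ler_wpM2l ?exprn_ge0 //.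
apply: le_trans (Esample_moment_diff_le k rho p_simplex W_stoch W_unit
  Proj_simplex Proj_id n_gt0) _.
rewrite -mulrA; apply: ler_wpM2l; first exact: ltW.
rewrite [X in _ <= X]mulr_natl.
apply: le_trans (_ : _ <= \sum_(i < K) expR (- (n%:R * KL_boundary W p))) _.
  by apply: ler_sum => i _; exact: prob_pcheck_lt0.
by rewrite sumr_const card_ord.
Qed.
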